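(* Let $n\ge 3$, let $C_n$ be the cycle on vertices $1,\dots,n$ in cyclic order, and let $\Delta$ be its distance squared matrix, a circulant matrix whose first row is $(c_1,\dots,c_n)$ with $c_1=0$ and $c_i=c_{n+2-i}=(i-1)^2$ for $2\le i\le \lfloor n/2\rfloor+1$. For $j=1,\dots,n$ let $\lambda_j=\sum_{i=1}^n c_i\,\omega^{(i-1)j}$ with $\omega=e^{2\pi \mathrm{i}/n}$ (the eigenvalue of $\Delta$ for the eigenvector $(1,\omega^j,\omega^{2j},\dots,\omega^{(n-1)j})^T$). If $n=2r+1$ is odd, then \[ \lambda_j=2\cos(\pi j)\sum_{k=1}^{r}k^2\cos\!\left(\frac{(n-2k)\pi}{n}j\right) = 2\cos(\pi j)\left(\cos\!\left(\tfrac{(n-2)\pi}{n}j\right)+4\cos\!\left(\tfrac{(n-4)\pi}{n}j\right)+\cdots+\tfrac{(n-1)^2}{4}\cos\!\left(\tfrac{\pi}{n}j\right)\right). \] If $n=2m$ is even, then \[ \lambda_j=2\cos(\pi j)\left(\frac{n^2}{8}+\sum_{k=1}^{m-1}k^2\cos\!\left(\frac{(n-2k)\pi}{n}j\right)\right). \]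
   Context: For a connected graph with vertices $1,\dots,n$, the distance squared matrix is the $n\times n$ matrix with $(i,j)$ entry $d_{ij}^2$, where $d_{ij}$ is the graph distance between $i$ and $j$. *)

From Stdlib Require Import Reals Lia.
From Coquelicot Require Import Coquelicot.
Open Scope R_scope.

(* Graph distance in the cycle C_n (vertices 1..n in cyclic order)
   between vertices a and b: min(|a-b|, n-|a-b|). *)
Definition cycle_dist (n a b : nat) : nat :=
  let d := (a - b + (b - a))%nat in Nat.min d (n - d).

Definition crow (n i : nat) : R := INR (cycle_dist n 1 i) ^ 2.

Definition omega (n : nat) : C := (cos (2 * PI / INR n), sin (2 * PI / INR n)).

(* Csum f a b = f a + f (a+1) + ... + f b  (zero if b < a) *)
Fixpoint Csum_upto (f : nat -> C) (len a : nat) : C :=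
  match len with
  | O => 0%C
  | S l => Cplus (f a) (Csum_upto f l (S a))
  end.
Definition Csum (f : nat -> C) (a b : nat) : C := Csum_upto f (S b - a) a.

Fixpoint Rsum_upto (f : nat -> R) (len a : nat) : R :=
  match len with
  | O => 0
  | S l => f a + Rsum_upto f l (S a)
  end.
Definition Rsum (f : nat -> R) (a b : nat) : R := Rsum_upto f (S b - a) a.

Definition lambda (n j : nat) : C :=
  Csum (fun i => Cmult (RtoC (crow n i)) (Cpow (omega n) ((i - 1) * j))) 1 n.

From Stdlib Require Import Reals Lia Lra.
From Coquelicot Require Import Coquelicot.
Open Scope R_scope.

(* Index the summands of lambda_j by k = i - 1 in {0, ..., n-1}. The summands k
   and n - k carry the same weight k^2 (the cycle distance is symmetric) and
   complex-conjugate powers of omega (as omega^n = 1), so together they give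
   2 k^2 cos(2 pi k j / n). Since sin(pi j) = 0 and cos(pi j)^2 = 1, this cosine
   equals cos(pi j) cos((n - 2k) pi j / n). For odd n every k >= 1 is paired in
   this way; for n = 2m the middle summand k = m is unpaired and equals
   m^2 omega^(m j) = (n^2 / 4) cos(pi j). *)

Lemma Rsum_upto_sum_n_m (f : nat -> R) (l a : nat) :
  Rsum_upto f (S l) a = sum_n_m f a (a + l).
Proof.
  revert a; induction l as [|l IH]; intros a; simpl.
  - rewrite Nat.add_0_r, sum_n_n; ring.
  - rewrite (sum_Sn_m _ a) by lia.
    replace (a + S l)%nat with (S a + l)%nat by lia.
    rewrite <- IH; reflexivity.
Qed.

Lemma Rsum_sum_n_m (f : nat -> R) (a b : nat) :
  (a <= b)%nat -> Rsum f a b = sum_n_m f a b.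
Proof.
  intros le_ab; unfold Rsum.
  replace (S b - a)%nat with (S (b - a)) by lia.
  rewrite Rsum_upto_sum_n_m; f_equal; lia.
Qed.

Lemma Csum_upto_sum_n_m (f : nat -> C) (l a : nat) :
  Csum_upto f (S l) a = sum_n_m f a (a + l).
Proof.
  revert a; induction l as [|l IH]; intros a; simpl.
  - rewrite Nat.add_0_r, sum_n_n; apply Cplus_0_r.
  - rewrite (sum_Sn_m _ a) by lia.
    replace (a + S l)%nat with (S a + l)%nat by lia.
    rewrite <- IH; reflexivity.
Qed.

Lemma Csum_sum_n_m (f : nat -> C) (a b : nat) :
  (a <= b)%nat -> Csum f a b = sum_n_m f a b.
Proof.
  intros le_ab; unfold Csum.
  replace (S b - a)%nat with (S (b - a)) by lia.
  rewrite Csum_upto_sum_n_m; f_equal; lia.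
Qed.

Lemma RtoC_sum_n_m (f : nat -> R) (a b : nat) :
  RtoC (sum_n_m f a b) = sum_n_m (fun k => RtoC (f k)) a b.
Proof.
  destruct (Nat.le_gt_cases a b) as [le_ab | lt_ba].
  - induction le_ab as [|b le_ab IH].
    + rewrite !sum_n_n; reflexivity.
    + rewrite !sum_n_Sm, <- IH by lia. apply RtoC_plus.
  - rewrite !sum_n_m_zero by exact lt_ba; reflexivity.
Qed.

Lemma sum_n_m_reflect {G : AbelianMonoid} (h : nat -> G) (N a b : nat) :
  (a <= S b)%nat -> (b < N)%nat ->
  sum_n_m (fun k => h (N - k)%nat) a b = sum_n_m h (N - b) (N - a).
Proof.
  intros le_a_Sb lt_bN.
  destruct (Nat.eq_dec a (S b)) as [-> | ne].
  { rewrite !sum_n_m_zero by lia; reflexivity. }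
  assert (le_ab : (a <= b)%nat) by lia. clear le_a_Sb ne.
  induction le_ab as [|b le_ab IH].
  - rewrite !sum_n_n; reflexivity.
  - rewrite sum_n_Sm, IH by lia.
    rewrite (sum_Sn_m h (N - S b)) by lia.
    replace (S (N - S b)) with (N - b)%nat by lia.
    apply plus_comm.
Qed.

Lemma sum_n_m_fold_odd {G : AbelianMonoid} (h : nat -> G) (n r : nat) :
  n = (2 * r + 1)%nat ->
  sum_n_m h 0 (n - 1) = plus (h 0%nat) (sum_n_m (fun k => plus (h k) (h (n - k)%nat)) 1 r).
Proof.
  intros ->.
  rewrite sum_Sn_m, (sum_n_m_Chasles h 1 r) by lia.
  rewrite sum_n_m_plus, sum_n_m_reflect by lia.
  repeat f_equal; lia.
Qed.

Lemma sum_n_m_fold_even {G : AbelianMonoid} (h : nat -> G) (n m : nat) :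
  n = (2 * m)%nat -> (1 <= m)%nat ->
  sum_n_m h 0 (n - 1) =
  plus (plus (h 0%nat) (h m)) (sum_n_m (fun k => plus (h k) (h (n - k)%nat)) 1 (m - 1)).
Proof.
  intros -> le_1m.
  rewrite sum_Sn_m, (sum_n_m_Chasles h 1 (m - 1)), (sum_Sn_m h (S (m - 1))) by lia.
  rewrite sum_n_m_plus, sum_n_m_reflect by lia.
  replace (S (m - 1)) with m by lia.
  replace (2 * m - (m - 1))%nat with (S m) by lia.
  rewrite <- plus_assoc; f_equal.
  rewrite !plus_assoc, (plus_comm (h m)); reflexivity.
Qed.

Lemma Cpow_cos_sin (x : R) (p : nat) :
  Cpow (cos x, sin x) p = (cos (x * INR p), sin (x * INR p)).
Proof.
  induction p as [|p IH]; simpl Cpow.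
  - rewrite Rmult_0_r, cos_0, sin_0; reflexivity.
  - rewrite IH, S_INR, Rmult_plus_distr_l, Rmult_1_r, cos_plus, sin_plus.
    unfold Cmult; simpl; f_equal; ring.
Qed.

Lemma sin_PI_INR (j : nat) : sin (PI * INR j) = 0.
Proof.
  apply sin_eq_0_1; exists (Z.of_nat j).
  rewrite <- INR_IZR_INZ; ring.
Qed.

Lemma cos_eq_cos_PI_INR_mul (j : nat) (x : R) :
  cos x = cos (PI * INR j) * cos (PI * INR j - x).
Proof.
  pose proof (sin2_cos2 (PI * INR j)) as cos2_1.
  rewrite sin_PI_INR in cos2_1; unfold Rsqr in cos2_1.
  rewrite cos_minus, sin_PI_INR.
  transitivity ((cos (PI * INR j) * cos (PI * INR j)) * cos x); [|ring].
  replace (cos (PI * INR j) * cos (PI * INR j)) with 1 by lra; ring.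
Qed.

Lemma omega_pow_add_reflect (n k j : nat) : (n <> 0)%nat -> (k <= n)%nat ->
  (Cpow (omega n) (k * j) + Cpow (omega n) ((n - k) * j))%C =
  RtoC (2 * cos (2 * PI / INR n * INR (k * j))).
Proof.
  intros n_neq0 le_kn.
  assert (INR n <> 0) by (apply not_0_INR; exact n_neq0).
  unfold omega; rewrite !Cpow_cos_sin.
  replace (2 * PI / INR n * INR ((n - k) * j))
    with (- (2 * PI / INR n * INR (k * j)) + 2 * INR j * PI)
    by (rewrite !mult_INR, minus_INR by exact le_kn; field; assumption).
  rewrite cos_period, sin_period, cos_neg, sin_neg.
  unfold Cplus, RtoC; simpl; f_equal; ring.
Qed.

Lemma cycle_dist_1_S (n k : nat) :
  (k <= n)%nat -> cycle_dist n 1 (S k) = Nat.min k (n - k).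
Proof. intros; unfold cycle_dist; f_equal; lia. Qed.

Lemma crow_S (n k : nat) : (2 * k <= n)%nat -> crow n (S k) = INR k ^ 2.
Proof. intros; unfold crow; rewrite cycle_dist_1_S by lia; do 2 f_equal; lia. Qed.

Lemma crow_S_reflect (n k : nat) : (k <= n)%nat -> crow n (S (n - k)) = crow n (S k).
Proof. intros; unfold crow; rewrite !cycle_dist_1_S by lia; do 2 f_equal; lia. Qed.

Definition lambda_term (n j k : nat) : C :=
  (RtoC (crow n (S k)) * Cpow (omega n) (k * j))%C.

Lemma lambda_sum_n_m (n j : nat) : (1 <= n)%nat ->
  lambda n j = sum_n_m (lambda_term n j) 0 (n - 1).
Proof.
  intros le_1n; unfold lambda; rewrite Csum_sum_n_m by exact le_1n.
  destruct n as [|n']; [lia|]; rewrite Nat.sub_succ, Nat.sub_0_r.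
  rewrite <- sum_n_m_S; apply sum_n_m_ext; intros k.
  unfold lambda_term; rewrite Nat.sub_succ, Nat.sub_0_r; reflexivity.
Qed.

Lemma lambda_term_0 (n j : nat) : lambda_term n j 0 = 0%C.
Proof.
  unfold lambda_term; rewrite crow_S by lia; simpl INR.
  rewrite pow_i by lia; apply Cmult_0_l.
Qed.

Lemma lambda_term_pair (n j k : nat) : (n <> 0)%nat -> (2 * k <= n)%nat ->
  (lambda_term n j k + lambda_term n j (n - k))%C =
  RtoC (2 * cos (PI * INR j) * (INR k ^ 2 * cos ((INR n - 2 * INR k) * PI / INR n * INR j))).
Proof.
  intros n_neq0 le_2k_n.
  assert (INR n <> 0) by (apply not_0_INR; exact n_neq0).
  unfold lambda_term; rewrite crow_S_reflect, crow_S by lia.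
  rewrite <- Cmult_plus_distr_l, omega_pow_add_reflect, <- RtoC_mult by lia.
  f_equal.
  rewrite (cos_eq_cos_PI_INR_mul j).
  replace (PI * INR j - 2 * PI / INR n * INR (k * j))
    with ((INR n - 2 * INR k) * PI / INR n * INR j)
    by (rewrite mult_INR; field; assumption).
  ring.
Qed.

Lemma lambda_term_half (n j m : nat) : n = (2 * m)%nat -> (1 <= m)%nat ->
  lambda_term n j m = RtoC (2 * cos (PI * INR j) * (INR n ^ 2 / 8)).
Proof.
  intros n_eq le_1m.
  assert (INR m <> 0) by (apply not_0_INR; lia).
  assert (INR n = 2 * INR m) as INR_n by (rewrite n_eq, mult_INR; reflexivity).
  unfold lambda_term, omega; rewrite crow_S, Cpow_cos_sin by lia.
  replace (2 * PI / INR n * INR (m * j)) with (PI * INR j)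
    by (rewrite mult_INR, INR_n; field; assumption).
  rewrite sin_PI_INR, INR_n.
  unfold Cmult, RtoC; simpl; f_equal; field.
Qed.

Lemma sum_n_m_RtoC_scal (c : R) (f : nat -> R) (a b : nat) :
  sum_n_m (fun k => RtoC (c * f k)) a b = RtoC (c * sum_n_m f a b).
Proof.
  rewrite <- (sum_n_m_mult_l (K := R_Ring)), RtoC_sum_n_m; reflexivity.
Qed.

Theorem theorem5p2 (n : nat) (Hn : (3 <= n)%nat) (j : nat) (Hj1 : (1 <= j)%nat) (Hjn : (j <= n)%nat) :
  (forall r : nat, n = (2 * r + 1)%nat ->
     lambda n j =
     RtoC (2 * cos (PI * INR j) *
           Rsum (fun k => INR k ^ 2 * cos ((INR n - 2 * INR k) * PI / INR n * INR j)) 1 r)) /\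
  (forall m : nat, n = (2 * m)%nat ->
     lambda n j =
     RtoC (2 * cos (PI * INR j) *
           (INR n ^ 2 / 8 +
            Rsum (fun k => INR k ^ 2 * cos ((INR n - 2 * INR k) * PI / INR n * INR j)) 1 (m - 1)))).
Proof.
  split.
  - intros r n_odd.
    rewrite lambda_sum_n_m, (sum_n_m_fold_odd _ n r n_odd) by lia.
    rewrite lambda_term_0, (plus_zero_l (G := C_AbelianMonoid)).
    rewrite Rsum_sum_n_m, <- sum_n_m_RtoC_scal by lia.
    apply sum_n_m_ext_loc; intros k Hk; apply lambda_term_pair; lia.
  - intros m n_even.
    rewrite lambda_sum_n_m, (sum_n_m_fold_even _ n m n_even) by lia.
    rewrite lambda_term_0, (plus_zero_l (G := C_AbelianMonoid)).
    rewrite lambda_term_half by lia.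
    rewrite Rsum_sum_n_m, Rmult_plus_distr_l, RtoC_plus, <- sum_n_m_RtoC_scal by lia.
    apply (f_equal2 Cplus); [reflexivity|].
    apply sum_n_m_ext_loc; intros k Hk; apply lambda_term_pair; lia.
Qed.
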